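(* Let $\phi_1,\ldots,\phi_n\vdash\psi_0$ be a sequent of $NOM$. Suppose that for every orthomodular lattice $\mathcal Q$ and every function $[\![\cdot]\!]:\Phi\to\mathcal Q$ satisfying $[\![\phi\wedge\psi]\!]=[\![\phi]\!]\wedge[\![\psi]\!]$, $[\![\phi\rightarrow\psi]\!]=[\![\phi]\!]\rightarrow[\![\psi]\!]$, and $[\![\neg\phi]\!]=\neg[\![\phi]\!]$ for all formulas $\phi,\psi$, we have $[\![\phi_1]\!]\mathbin{\&}\cdots\mathbin{\&}[\![\phi_n]\!]\le[\![\psi_0]\!]$. Then $\phi_1,\ldots,\phi_n\vdash\psi_0$ is derivable in $NOM$.
   Context: $\Phi$ is the set of formulas of the propositional deductive system $NOM$: formulas are built from propositional letters using $\wedge$, $\rightarrow$, $\neg$. Sequents are $\phi_1,\ldots,\phi_n\vdash\psi$ ($n\ge0$) with antecedent a finite ordered sequence. With $\Gamma$ a finite possibly empty sequence of formulas and $\phi,\psi,\chi$ formulas, the rules of $NOM$ are: (assumption) $\Gamma,\phi\vdash\phi$; (cut) $\Gamma\vdash\phi$, $\Gamma,\phi\vdash\psi$ $\Rightarrow$ $\Gamma\vdash\psi$; (paste) $\Gamma\vdash\phi$, $\Gamma\vdash\psi$ $\Rightarrow$ $\Gamma,\phi\vdash\psi$; (compatible exchange) $\Gamma,\phi,\psi\vdash\phi$, $\Gamma,\phi,\psi\vdash\chi$, $\Gamma,\psi,\phi\vdash\psi$ $\Rightarrow$ $\Gamma,\psi,\phi\vdash\chi$; ($\wedge$-intro) $\Gamma\vdash\phi$,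 $\Gamma\vdash\psi$ $\Rightarrow$ $\Gamma\vdash\phi\wedge\psi$; ($\wedge$-elim) $\Gamma\vdash\phi\wedge\psi$ $\Rightarrow$ $\Gamma\vdash\phi$ and $\Rightarrow$ $\Gamma\vdash\psi$; ($\rightarrow$-intro) $\Gamma,\phi\vdash\psi$ $\Rightarrow$ $\Gamma\vdash\phi\rightarrow\psi$; ($\rightarrow$-elim) $\Gamma\vdash\phi\rightarrow\psi$ $\Rightarrow$ $\Gamma,\phi\vdash\psi$; (excluded middle) $\Gamma,\phi\vdash\psi$, $\Gamma,\neg\phi\vdash\psi$ $\Rightarrow$ $\Gamma\vdash\psi$; (explosion) $\Gamma\vdash\neg\phi$ $\Rightarrow$ $\Gamma,\phi\vdash\psi$. An orthomodular lattice is a bounded lattice with an order-reversing involution $\neg$ satisfying $a\wedge\neg a=\bot$, $a\vee\neg a=\top$, and $a\le b\Rightarrow a\vee(\neg a\wedge b)=b$. In it, $a\mathbin{\&}b=(a\vee\neg b)\wedge b$ and $a\rightarrow b=\neg a\vee(a\wedge b)$; $\&$ associates to the left and $a_1\mathbin{\&}\cdots\mathbin{\&}a_n=\top$ when $n=0$. *)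

From HB Require Import structures.
From mathcomp Require Import all_boot all_order.
Set Implicit Arguments. Unset Strict Implicit. Unset Printing Implicit Defensive.
Import Order.TTheory.
Local Open Scope order_scope.

Inductive form : Type :=
  | Var  : nat -> form
  | And  : form -> form -> form
  | Imp  : form -> form -> form
  | Neg  : form -> form.

(* Sequents  Gamma |- psi ; Gamma is an ordered finite sequence, and
   "Gamma, phi" is rcons Gamma phi (phi appended on the right). *)
Inductive derivable : seq form -> form -> Prop :=
  | d_assum  : forall G p, derivable (rcons G p) p
  | d_cut    : forall G p q, derivable G p -> derivable (rcons G p) q -> derivable G q
  | d_paste  : forall G p q, derivable G p -> derivable G q -> derivable (rcons G p) q
  | d_cexch  : forall G p q r,
      derivable (rcons (rcons G p) q) p ->
      derivable (rcons (rcons G p) q) r ->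
      derivable (rcons (rcons G q) p) q ->
      derivable (rcons (rcons G q) p) r
  | d_andI   : forall G p q, derivable G p -> derivable G q -> derivable G (And p q)
  | d_andE1  : forall G p q, derivable G (And p q) -> derivable G p
  | d_andE2  : forall G p q, derivable G (And p q) -> derivable G q
  | d_impI   : forall G p q, derivable (rcons G p) q -> derivable G (Imp p q)
  | d_impE   : forall G p q, derivable G (Imp p q) -> derivable (rcons G p) q
  | d_em     : forall G p q,
      derivable (rcons G p) q -> derivable (rcons G (Neg p)) q -> derivable G q
  | d_explo  : forall G p q, derivable G (Neg p) -> derivable (rcons G p) q.

Definition orthomodular {d : Order.disp_t} {L : tbLatticeType d} (ortho : L -> L) : Prop :=
  [/\ forall a, ortho (ortho a) = a,
      forall a b, a <= b -> ortho b <= ortho a,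
      forall a, Order.meet a (ortho a) = \bot,
      forall a, Order.join a (ortho a) = \top
    & forall a b, a <= b -> Order.join a (Order.meet (ortho a) b) = b].

(* Sasaki product  a & b = (a \/ ~b) /\ b  and Sasaki arrow  a -> b = ~a \/ (a /\ b). *)
Definition sand {d : Order.disp_t} {L : tbLatticeType d} (ortho : L -> L) (a b : L) : L :=
  Order.meet (Order.join a (ortho b)) b.
Definition simp {d : Order.disp_t} {L : tbLatticeType d} (ortho : L -> L) (a b : L) : L :=
  Order.join (ortho a) (Order.meet a b).

Definition sand_seq {d : Order.disp_t} {L : tbLatticeType d} (ortho : L -> L) (s : seq L) : L :=
  match s with
  | [::] => \top
  | a :: s' => foldl (sand ortho) a s'
  end.

Definition interp_hom {d : Order.disp_t} {L : tbLatticeType d} (ortho : L -> L)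
  (v : form -> L) : Prop :=
  [/\ forall p q, v (And p q) = Order.meet (v p) (v q),
      forall p q, v (Imp p q) = simp ortho (v p) (v q)
    & forall p, v (Neg p) = ortho (v p)].

(* Completeness via the Lindenbaum-Tarski algebra.  Formulas modulo mutual
   single-premise derivability, ordered by [p |- q], form an orthomodular
   lattice in which And and Neg are meet and orthocomplement, Neg (And (Neg p)
   (Neg q)) is the join and Imp is the Sasaki arrow, so the class map is an
   interpretation.  In every orthomodular lattice x & a <= c implies
   x <= a -> c; hence the hypothesis for the class map gives
   \top <= [phi_1 -> (... -> (phi_n -> psi_0))], i.e. that implication is a
   theorem of NOM, and ->-elimination restores the premises one by one. *)

From HB Require Import structures.
From mathcomp Require Import all_boot all_order boolp.
Import Order.TTheory.
Local Open Scope order_scope.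

Set Implicit Arguments.
Unset Strict Implicit.

Lemma derivable_catl G D p : derivable D p -> derivable (G ++ D) p.
Proof.
elim=> {}D {}p.
- by rewrite -rcons_cat; exact: d_assum.
- by move=> q _ Dp _; rewrite -rcons_cat; exact: d_cut.
- by move=> q _ Dp _ Dq; rewrite -rcons_cat; exact: d_paste.
- by move=> q r _ Dp _ Dr _ Dq; rewrite -!rcons_cat in Dp Dr Dq *; exact: d_cexch Dp Dr Dq.
- by move=> q _ Dp _ Dq; exact: d_andI.
- by move=> q _ Dpq; exact: d_andE1 Dpq.
- by move=> q _ Dpq; exact: d_andE2 Dpq.
- by move=> q _ Dq; rewrite -rcons_cat in Dq; exact: d_impI.
- by move=> q _ Dpq; rewrite -rcons_cat; exact: d_impE.
- by move=> q _ Dq _ Dnq; rewrite -!rcons_cat in Dq Dnq; exact: d_em Dq Dnq.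
- by move=> q _ Dnp; rewrite -rcons_cat; exact: d_explo.
Qed.

Lemma derivable_nil G p : derivable [::] p -> derivable G p.
Proof. by move/(derivable_catl G); rewrite cats0. Qed.

Lemma derivable_mp G p q : derivable G p -> derivable G (Imp p q) -> derivable G q.
Proof. by move=> Dp /d_impE; exact: d_cut. Qed.

Definition entails p q := derivable [:: p] q.

Lemma derivable_entails G p q : entails p q -> derivable G p -> derivable G q.
Proof. by move=> /(@d_impI [::]) /(derivable_nil G) Dpq Dp; exact: derivable_mp Dpq. Qed.

Lemma derivable_dne G p : derivable (rcons G (Neg (Neg p))) p.
Proof. by apply: (d_em (p := p)); [exact: d_assum | apply: d_explo; exact: d_assum]. Qed.

Lemma derivable_dni G p : derivable (rcons G p) (Neg (Neg p)).
Proof.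
apply: d_impE; apply: (d_em (p := Neg p)); apply: d_impI.
- by apply: d_explo; exact: d_assum.
- by apply: d_paste; [exact: derivable_dne | exact: d_assum].
Qed.

Lemma derivable_absurd G p q : derivable G p -> derivable G (Neg p) -> derivable G q.
Proof. by move=> Dp /(d_explo q); exact: d_cut. Qed.

Lemma derivable_negI G p : derivable (rcons G p) (Neg p) -> derivable G (Neg p).
Proof. by move=> Dnp; apply: d_em Dnp (d_assum _ _). Qed.

(* The context G, a cannot be weakened to G, so the refutation of c is
   transported through G, c, a by compatible exchange. *)
Lemma derivable_refuted_ext G a c q :
  derivable G (Neg c) -> derivable (rcons G a) c -> derivable (rcons G a) q.
Proof.
move=> Dnc Dac; apply: (d_cut Dac); apply: (d_cexch (p := c)).
- by apply: d_paste; exact: d_explo.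
- by apply: d_paste; exact: d_explo.
- by apply: d_paste; [exact: Dac | exact: d_assum].
Qed.

Lemma derivable_contra G p q : entails p q -> derivable G (Neg q) -> derivable G (Neg p).
Proof.
move=> Epq Dnq; apply: derivable_negI; apply: derivable_refuted_ext Dnq _.
by apply: derivable_entails Epq _; exact: d_assum.
Qed.

(* Contexts are not monotone: p survives the later assumption q only because
   q is compatible with p, as witnessed by Neg p |- q. *)
Lemma derivable_recall_compatible G p q :
  entails (Neg p) q -> derivable (rcons (rcons G p) q) p.
Proof.
move=> Enpq; apply: (d_em (p := Neg p)); last exact: derivable_dne.
apply: (d_cexch (p := Neg p)).
- by apply: d_paste; apply: d_explo; exact: derivable_dni.
- by apply: d_paste; apply: d_explo; exact: derivable_dni.
- by apply: derivable_entails Enpq _; exact: d_assum.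
Qed.

Lemma derivable_uncurry H G p : derivable H (foldr Imp p G) -> derivable (H ++ G) p.
Proof.
elim: G H => [|q G IH] H /=; first by rewrite cats0.
by move/d_impE/IH; rewrite cat_rcons.
Qed.

Definition verum := Imp (Var 0) (Var 0).
Definition falsum := Neg verum.
Definition disj p q := Neg (And (Neg p) (Neg q)).

Lemma derivable_verum G : derivable G verum.
Proof. by apply: d_impI; exact: d_assum. Qed.

Lemma entails_refl p : entails p p.
Proof. exact: d_assum [::] p. Qed.

Lemma entails_trans p q r : entails p q -> entails q r -> entails p r.
Proof. by move=> Epq Eqr; exact: derivable_entails Eqr Epq. Qed.

Lemma entails_and r p q : entails r p -> entails r q -> entails r (And p q).
Proof. exact: d_andI. Qed.

Lemma entails_andl p q : entails (And p q) p.
Proof. exact/d_andE1/entails_refl. Qed.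

Lemma entails_andr p q : entails (And p q) q.
Proof. exact/d_andE2/entails_refl. Qed.

Lemma entails_verum p : entails p verum.
Proof. exact: derivable_verum. Qed.

Lemma falsum_entails p : entails falsum p.
Proof. exact: derivable_absurd (derivable_verum _) (entails_refl _). Qed.

Lemma entails_dni p : entails p (Neg (Neg p)).
Proof. exact: derivable_dni [::] p. Qed.

Lemma dne_entails p : entails (Neg (Neg p)) p.
Proof. exact: derivable_dne [::] p. Qed.

Lemma entails_neg p q : entails p q -> entails (Neg q) (Neg p).
Proof. by move=> Epq; exact: derivable_contra Epq (entails_refl _). Qed.

Lemma and_negr_entails p : entails (And p (Neg p)) falsum.
Proof. exact: derivable_absurd (entails_andl _ _) (entails_andr _ _). Qed.

Lemma entails_disjl p q : entails p (disj p q).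
Proof.
apply: derivable_negI; apply: derivable_refuted_ext (entails_dni p) _.
by apply: derivable_entails (entails_andl _ _) _; exact: d_assum.
Qed.

Lemma entails_disjr p q : entails q (disj p q).
Proof.
apply: derivable_negI; apply: derivable_refuted_ext (entails_dni q) _.
by apply: derivable_entails (entails_andr _ _) _; exact: d_assum.
Qed.

Lemma disj_entails p q r : entails p r -> entails q r -> entails (disj p q) r.
Proof.
move=> Epr Eqr; apply: entails_trans (dne_entails r).
by apply/entails_neg/entails_and; exact: entails_neg.
Qed.

Lemma verum_entails_disjN p : entails verum (disj p (Neg p)).
Proof.
apply: derivable_negI; apply: derivable_absurd.
- by apply: derivable_entails (entails_andl _ _) _; exact: d_assum.
- by apply: derivable_entails (entails_andr _ _) _; exact: d_assum.
Qed.

Lemma entails_orthomodular p q : entails p q -> entails q (disj p (And (Neg p) q)).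
Proof.
move=> Epq; apply: (d_em (p := p)).
- by apply: derivable_entails (entails_disjl _ _) _; exact: d_assum.
- apply: derivable_entails (entails_disjr _ _) _; apply: d_andI; first exact: d_assum.
  exact/(derivable_recall_compatible [::])/entails_neg.
Qed.

Lemma imp_entails_sasaki p q : entails (Imp p q) (disj (Neg p) (And p q)).
Proof.
apply: (d_em (p := p)).
- apply: derivable_entails (entails_disjr _ _) _; apply: d_andI; first exact: d_assum.
  exact/d_impE/entails_refl.
- by apply: derivable_entails (entails_disjl _ _) _; exact: d_assum.
Qed.

Lemma sasaki_entails_imp p q : entails (disj (Neg p) (And p q)) (Imp p q).
Proof.
apply: disj_entails; apply: d_impI.
- by apply: d_explo; exact: entails_refl.
- by apply: d_paste; [exact: entails_andl | exact: entails_andr].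
Qed.

Lemma and_entails2 p p' q q' :
  entails p p' -> entails q q' -> entails (And p q) (And p' q').
Proof.
move=> Ep Eq; apply: entails_and.
- exact: entails_trans (entails_andl _ _) Ep.
- exact: entails_trans (entails_andr _ _) Eq.
Qed.

Lemma disj_entails2 p p' q q' :
  entails p p' -> entails q q' -> entails (disj p q) (disj p' q').
Proof. by move=> Ep Eq; apply/entails_neg/and_entails2; exact: entails_neg. Qed.

Section SasakiAdjunction.
Context {disp : Order.disp_t} {L : tbLatticeType disp} (ortho : L -> L).
Hypothesis ortho_OM : orthomodular ortho.

(* Orthomodularity applied to ortho a <= x `|` ortho a recovers x `|` ortho a
   as ortho a `|` (a `&` (x `|` ortho a)), whose second part is sand x a. *)
Lemma sand_le_simp x a c : sand ortho x a <= c -> x <= simp ortho a c.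
Proof.
case: ortho_OM => orthoK _ _ _ OM xa_le_c; set y := Order.join x (ortho a).
have /OM : ortho a <= y by exact: leUr.
rewrite orthoK => y_eq; apply: le_trans (leUl x (ortho a)) _.
rewrite -/y -y_eq leU2 // lexI leIl /= (le_trans _ xa_le_c) //.
by rewrite /sand meetC.
Qed.

Lemma sand_seq_rcons s a : sand_seq ortho (rcons s a) = sand ortho (sand_seq ortho s) a.
Proof.
case: s => [|b s] /=; last by rewrite foldl_rcons.
by rewrite /sand join1x meet1x.
Qed.

Lemma sand_seq_le_curry (v : form -> L) G p : interp_hom ortho v ->
  sand_seq ortho (map v G) <= v p -> \top <= v (foldr Imp p G).
Proof.
case=> _ v_imp _; elim/last_ind: G p => [//|G q IH] p.
rewrite map_rcons sand_seq_rcons foldr_rcons => /sand_le_simp le_simp.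
by apply: IH; rewrite v_imp.
Qed.

End SasakiAdjunction.

Definition equivalent p q := entails p q /\ entails q p.

Definition equivalentb : rel form := fun p q => `[< equivalent p q >].

Lemma equivalentbP p q : reflect (equivalent p q) (equivalentb p q).
Proof. exact: asboolP. Qed.

Lemma equivalentb_refl : reflexive equivalentb.
Proof. by move=> p; apply/equivalentbP; split; exact: entails_refl. Qed.

Lemma equivalentb_sym : symmetric equivalentb.
Proof. by move=> p q; apply/equivalentbP/equivalentbP => -[]. Qed.

Lemma equivalentb_trans : transitive equivalentb.
Proof.
move=> q p r /equivalentbP[Epq Eqp] /equivalentbP[Eqr Erq].
by apply/equivalentbP; split; [exact: entails_trans Epq Eqr | exact: entails_trans Erq Eqp].
Qed.

HB.instance Definition _ := gen_eqMixin form.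
HB.instance Definition _ := gen_choiceMixin form.

Canonical equivalent_equiv :=
  EquivRel equivalentb equivalentb_refl equivalentb_sym equivalentb_trans.

Local Open Scope quotient_scope.
Definition lindenbaum := {eq_quot equivalentb}.
HB.instance Definition _ : EqQuotient _ equivalentb lindenbaum := EqQuotient.on lindenbaum.
HB.instance Definition _ := Choice.on lindenbaum.

Lemma pi_equivalent p q : equivalent p q -> \pi_lindenbaum p = \pi_lindenbaum q.
Proof. by move/equivalentbP/(@eqquotP _ _ lindenbaum). Qed.

Lemma repr_pi p : equivalent (repr (\pi_lindenbaum p)) p.
Proof. by apply/equivalentbP/(@eqquotP _ _ lindenbaum); rewrite reprK. Qed.

Definition entailsb (p q : form) := `[< entails p q >].
Definition le_lindenbaum := lift_fun2 lindenbaum entailsb.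

Lemma pi_le_lindenbaum : {mono \pi_lindenbaum : p q / entailsb p q >-> le_lindenbaum p q}.
Proof.
move=> p q; unlock le_lindenbaum; rewrite /entailsb.
have [[Ep Ep'] [Eq Eq']] := (repr_pi p, repr_pi q).
apply/asboolP/asboolP => E.
- exact: entails_trans Ep' (entails_trans E Eq).
- exact: entails_trans Ep (entails_trans E Eq').
Qed.
Canonical le_lindenbaum_mono := PiMono2 pi_le_lindenbaum.

Lemma le_lindenbaum_refl : reflexive le_lindenbaum.
Proof. by elim/quotW=> p; rewrite piE; exact/asboolP/entails_refl. Qed.

Lemma le_lindenbaum_anti : antisymmetric le_lindenbaum.
Proof.
elim/quotW=> p; elim/quotW=> q; rewrite !piE => /andP[/asboolP Epq /asboolP Eqp].
exact: pi_equivalent.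
Qed.

Lemma le_lindenbaum_trans : transitive le_lindenbaum.
Proof.
elim/quotW=> q; elim/quotW=> p; elim/quotW=> r; rewrite !piE.
by move=> /asboolP Epq /asboolP Eqr; exact/asboolP/(entails_trans Epq).
Qed.

HB.instance Definition _ := Order.Le_isPOrder.Build (Order.Disp tt tt) lindenbaum
  le_lindenbaum_refl le_lindenbaum_anti le_lindenbaum_trans.

Lemma pi_le p q : (\pi_lindenbaum p <= \pi_lindenbaum q) = `[< entails p q >].
Proof. exact: piE. Qed.

Definition meet_lindenbaum := lift_op2 lindenbaum And.
Definition join_lindenbaum := lift_op2 lindenbaum disj.
Definition ortho_lindenbaum := lift_op1 lindenbaum Neg.

Lemma pi_meet_lindenbaum : {morph \pi_lindenbaum : p q / And p q >-> meet_lindenbaum p q}.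
Proof.
move=> p q; unlock meet_lindenbaum; apply: pi_equivalent.
have [[Ep Ep'] [Eq Eq']] := (repr_pi p, repr_pi q).
by split; exact: and_entails2.
Qed.
Canonical meet_lindenbaum_morph := PiMorph2 pi_meet_lindenbaum.

Lemma pi_join_lindenbaum : {morph \pi_lindenbaum : p q / disj p q >-> join_lindenbaum p q}.
Proof.
move=> p q; unlock join_lindenbaum; apply: pi_equivalent.
have [[Ep Ep'] [Eq Eq']] := (repr_pi p, repr_pi q).
by split; exact: disj_entails2.
Qed.
Canonical join_lindenbaum_morph := PiMorph2 pi_join_lindenbaum.

Lemma pi_ortho_lindenbaum : {morph \pi_lindenbaum : p / Neg p >-> ortho_lindenbaum p}.
Proof.
move=> p; unlock ortho_lindenbaum; apply: pi_equivalent.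
by have [Ep Ep'] := repr_pi p; split; exact: entails_neg.
Qed.
Canonical ortho_lindenbaum_morph := PiMorph1 pi_ortho_lindenbaum.

Lemma le_meet_lindenbaum x y z :
  (x <= meet_lindenbaum y z) = (x <= y) && (x <= z).
Proof.
elim/quotW: x => p; elim/quotW: y => q; elim/quotW: z => r.
rewrite piE !pi_le; apply/asboolP/andP => [Epqr|[/asboolP Epq /asboolP Epr]].
- by split; apply/asboolP; apply: entails_trans Epqr _;
    [exact: entails_andl | exact: entails_andr].
- exact: entails_and.
Qed.

Lemma join_lindenbaum_le x y z :
  (join_lindenbaum x y <= z) = (x <= z) && (y <= z).
Proof.
elim/quotW: x => p; elim/quotW: y => q; elim/quotW: z => r.
rewrite piE !pi_le; apply/asboolP/andP => [Epqr|[/asboolP Epr /asboolP Eqr]].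
- by split; apply/asboolP; apply: entails_trans _ Epqr;
    [exact: entails_disjl | exact: entails_disjr].
- exact: disj_entails.
Qed.

HB.instance Definition _ := Order.POrder_MeetJoin_isLattice.Build (Order.Disp tt tt)
  lindenbaum le_meet_lindenbaum join_lindenbaum_le.

Lemma falsum_le_lindenbaum x : \pi_lindenbaum falsum <= x.
Proof. by elim/quotW: x => p; rewrite pi_le; exact/asboolP/falsum_entails. Qed.

Lemma le_verum_lindenbaum x : x <= \pi_lindenbaum verum.
Proof. by elim/quotW: x => p; rewrite pi_le; exact/asboolP/entails_verum. Qed.

HB.instance Definition _ :=
  Order.hasBottom.Build (Order.Disp tt tt) lindenbaum falsum_le_lindenbaum.
HB.instance Definition _ :=
  Order.hasTop.Build (Order.Disp tt tt) lindenbaum le_verum_lindenbaum.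

Lemma pi_meet p q : Order.meet (\pi_lindenbaum p) (\pi_lindenbaum q) = \pi_lindenbaum (And p q).
Proof. by rewrite pi_meet_lindenbaum. Qed.

Lemma pi_join p q : Order.join (\pi_lindenbaum p) (\pi_lindenbaum q) = \pi_lindenbaum (disj p q).
Proof. by rewrite pi_join_lindenbaum. Qed.

Lemma lindenbaum_orthomodular : orthomodular ortho_lindenbaum.
Proof.
split.
- by elim/quotW=> p; rewrite !piE; apply: pi_equivalent; split;
    [exact: dne_entails | exact: entails_dni].
- elim/quotW=> p; elim/quotW=> q; rewrite !piE !pi_le.
  by move=> /asboolP/entails_neg/asboolP.
- elim/quotW=> p; rewrite piE pi_meet; apply: pi_equivalent; split;
    [exact: and_negr_entails | exact: falsum_entails].
- elim/quotW=> p; rewrite piE pi_join; apply: pi_equivalent; split;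
    [exact: entails_verum | exact: verum_entails_disjN].
- elim/quotW=> p; elim/quotW=> q; rewrite pi_le => /asboolP Epq.
  rewrite piE pi_meet pi_join; apply: pi_equivalent; split.
  + exact: disj_entails Epq (entails_andr _ _).
  + exact: entails_orthomodular.
Qed.

Lemma pi_interp_hom : interp_hom ortho_lindenbaum \pi_lindenbaum.
Proof.
split=> [p q|p q|p]; rewrite ?piE //.
- by rewrite pi_meet.
- rewrite /simp piE pi_meet pi_join; apply: pi_equivalent; split;
    [exact: imp_entails_sasaki | exact: sasaki_entails_imp].
Qed.

Theorem corollary3p9 (Gamma : seq form) (psi0 : form) :
  (forall (d : Order.disp_t) (L : tbLatticeType d) (ortho : L -> L),
      orthomodular ortho ->
      forall v : form -> L, interp_hom ortho v ->
        sand_seq ortho (map v Gamma) <= v psi0) ->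
  derivable Gamma psi0.
Proof.
move=> valid.
have := valid _ _ _ lindenbaum_orthomodular _ pi_interp_hom.
move/(sand_seq_le_curry lindenbaum_orthomodular pi_interp_hom).
rewrite (_ : \top = \pi_lindenbaum verum) // pi_le => /asboolP curried.
apply: (derivable_uncurry (H := [::])); exact: derivable_entails curried (derivable_verum _).
Qed.
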